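(* Consider the deterministic forward–backward system: find continuous functions $\mu,h:[0,T]\to\mathbb{R}$ such that $$\frac{d\mu_t}{dt}=-w_t^{-2}h_t,\qquad \frac{dh_t}{dt}=0,\qquad t\in[0,T],\qquad \mu_0=0,\qquad h_T=g(\mu_T).$$ This system has exactly three solutions, namely $$(\mu_t,h_t)_{t\in[0,T]}=\Big(-A\int_0^t w_s^{-2}\,ds,\;A\Big)_{t\in[0,T]},\qquad A\in\{-1,0,1\}.$$
   Context: Fix $T>0$, $\kappa\in\mathbb{R}$ and $\delta\in(0,T)$. Let $\eta:[0,T]\to\mathbb{R}$ be the solution of the Riccati equation $\eta_t'=\eta_t^2-2\kappa\eta_t-1$, $\eta_T=1$. Set $w_t=\exp\big(\int_t^T(\eta_s-\kappa)\,ds\big)$ and $r_t=\int_t^T w_s^{-2}\,ds$ for $t\in[0,T]$; note $r_\delta>0$. Define $g:\mathbb{R}\to\mathbb{R}$ by $g(x)=-x/r_\delta$ if $|x|\le r_\delta$ and $g(x)=-\mathrm{sign}(x)$ if $|x|>r_\delta$. *)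

From Stdlib Require Import Reals Lra ClassicalEpsilon.
Open Scope R_scope.

(* Total Riemann integral: the value of RiemannInt when f is Riemann
   integrable on [a,b] (orientation as in Stdlib), arbitrary otherwise.
   All integrands used below are continuous, hence integrable. *)
Definition Rint (f : R -> R) (a b : R) : R :=
  epsilon (inhabits 0)
    (fun I => exists pr : Riemann_integrable f a b, RiemannInt pr = I).

Definition deriv_within (a b : R) (f : R -> R) (t l : R) : Prop :=
  forall eps, 0 < eps -> exists delta, 0 < delta /\
    forall s, a <= s <= b -> s <> t -> Rabs (s - t) < delta ->
      Rabs ((f s - f t) / (s - t) - l) < eps.

Definition cont_within (a b : R) (f : R -> R) (t : R) : Prop :=
  forall eps, 0 < eps -> exists delta, 0 < delta /\
    forall s, a <= s <= b -> Rabs (s - t) < delta -> Rabs (f s - f t) < eps.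

Definition riccati_sol (T kappa : R) (eta : R -> R) : Prop :=
  (forall t, 0 <= t <= T ->
     deriv_within 0 T eta t (eta t ^ 2 - 2 * kappa * eta t - 1)) /\
  eta T = 1.

Definition wfun (T kappa : R) (eta : R -> R) (t : R) : R :=
  exp (Rint (fun s => eta s - kappa) t T).

Definition rfun (T kappa : R) (eta : R -> R) (t : R) : R :=
  Rint (fun s => / (wfun T kappa eta s) ^ 2) t T.

Definition Rsign (x : R) : R :=
  if Rlt_dec 0 x then 1 else if Rlt_dec x 0 then -1 else 0.

Definition gfun (T kappa delta : R) (eta : R -> R) (x : R) : R :=
  let rd := rfun T kappa eta delta in
  if Rle_dec (Rabs x) rd then - x / rd else - Rsign x.

Definition fb_solution (T kappa delta : R) (eta mu h : R -> R) : Prop :=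
  (forall t, 0 <= t <= T -> cont_within 0 T mu t /\ cont_within 0 T h t) /\
  (forall t, 0 <= t <= T ->
     deriv_within 0 T mu t (- / (wfun T kappa eta t) ^ 2 * h t) /\
     deriv_within 0 T h t 0) /\
  mu 0 = 0 /\
  h T = gfun T kappa delta eta (mu T).

From Stdlib Require Import Reals Lra ClassicalEpsilon.
From Coquelicot Require Import Coquelicot.
Open Scope R_scope.

(* The equation dh/dt = 0 forces h to be a constant A, and then mu_t = -A R_t
   with R_t := int_0^t w_s^-2 ds.  The terminal condition becomes
   A = g(-A R_T), and since 0 < r_delta < R_T its only roots are -1, 0, 1: on
   the linear piece of g it reads A (R_T - r_delta) = 0, and off it A = sign A
   with A <> 0.  The Riccati equation enters only through the continuity of
   eta, which makes w^-2 continuous and positive, with primitive R. *)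

Lemma ex_RInt_continuous_R (f : R -> R) a b :
  (forall x, continuous f x) -> ex_RInt f a b.
Proof. intros Hf; apply (@ex_RInt_continuous R_CompleteNormedModule); auto. Qed.

Lemma Rint_eq_RInt (f : R -> R) a b : ex_RInt f a b -> Rint f a b = RInt f a b.
Proof.
  intros Hf. pose proof (ex_RInt_Reals_0 _ _ _ Hf) as pr.
  unfold Rint.
  destruct (epsilon_spec (inhabits 0)
    (fun I => exists pr : Riemann_integrable f a b, RiemannInt pr = I)
    (ex_intro _ (RiemannInt pr) (ex_intro _ pr eq_refl))) as [pr' Hpr'].
  rewrite <- Hpr', (RInt_Reals f a b pr'). reflexivity.
Qed.

Lemma Rint_eq_RInt_continuous (f g : R -> R) a b :
  (forall x, continuous g x) ->
  (forall x, Rmin a b <= x <= Rmax a b -> f x = g x) ->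
  Rint f a b = RInt g a b.
Proof.
  intros Hg Efg.
  assert (Hf : ex_RInt f a b).
  { apply (ex_RInt_ext g); [| now apply ex_RInt_continuous_R].
    intros x Hx. symmetry; apply Efg; lra. }
  rewrite (Rint_eq_RInt _ _ _ Hf). apply RInt_ext. intros x Hx. apply Efg; lra.
Qed.

Definition clamp (a b x : R) : R := Rmax a (Rmin b x).

Lemma clamp_in a b x : a <= b -> a <= clamp a b x <= b.
Proof. intros; unfold clamp, Rmax, Rmin; repeat destruct Rle_dec; lra. Qed.

Lemma clamp_id a b x : a <= x <= b -> clamp a b x = x.
Proof. intros; unfold clamp, Rmax, Rmin; repeat destruct Rle_dec; lra. Qed.

Lemma clamp_lipschitz a b x y : Rabs (clamp a b x - clamp a b y) <= Rabs (x - y).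
Proof.
  unfold clamp, Rmax, Rmin; repeat destruct Rle_dec; unfold Rabs;
  repeat destruct Rcase_abs; lra.
Qed.

Lemma continuous_clamp a b (f : R -> R) : a <= b ->
  (forall t, a <= t <= b -> cont_within a b f t) ->
  forall x, continuous (fun x => f (clamp a b x)) x.
Proof.
  intros Hab Hf x. apply continuity_pt_filterlim.
  intros eps Heps.
  destruct (Hf (clamp a b x) (clamp_in a b x Hab) eps Heps) as [d [Hd Hs]].
  exists d; split; auto. intros y [_ Hy]. simpl in *. unfold R_dist in *.
  apply Hs; [now apply clamp_in |].
  eapply Rle_lt_trans; [apply clamp_lipschitz | exact Hy].
Qed.

Section DerivWithin.

Variables a b : R.

Lemma deriv_within_ext (f g : R -> R) t l :
  (forall s, a <= s <= b -> f s = g s) -> a <= t <= b ->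
  deriv_within a b g t l -> deriv_within a b f t l.
Proof.
  intros Efg Ht Hg eps He. destruct (Hg eps He) as [d [Hd Hs]].
  exists d; split; auto. intros s H1 H2 H3. rewrite (Efg s H1), (Efg t Ht). auto.
Qed.

Lemma deriv_within_const k t : deriv_within a b (fun _ => k) t 0.
Proof.
  intros eps He. exists 1. split; [lra |]. intros s _ Hst _.
  replace ((k - k) / (s - t) - 0) with 0 by (field; lra). rewrite Rabs_R0; lra.
Qed.

Lemma deriv_within_plus (f g : R -> R) t l1 l2 :
  deriv_within a b f t l1 -> deriv_within a b g t l2 ->
  deriv_within a b (fun x => f x + g x) t (l1 + l2).
Proof.
  intros Hf Hg eps He.
  destruct (Hf (eps / 2) ltac:(lra)) as [d1 [Hd1 Hs1]].
  destruct (Hg (eps / 2) ltac:(lra)) as [d2 [Hd2 Hs2]].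
  exists (Rmin d1 d2); split; [now apply Rmin_pos |].
  intros s Hs Hst Hsd.
  pose proof (Rmin_l d1 d2); pose proof (Rmin_r d1 d2).
  specialize (Hs1 s Hs Hst ltac:(lra)). specialize (Hs2 s Hs Hst ltac:(lra)).
  replace ((f s + g s - (f t + g t)) / (s - t) - (l1 + l2)) with
    (((f s - f t) / (s - t) - l1) + ((g s - g t) / (s - t) - l2))
    by (field; lra).
  eapply Rle_lt_trans; [apply Rabs_triang | lra].
Qed.

Lemma deriv_within_scal (f : R -> R) t l k :
  deriv_within a b f t l -> deriv_within a b (fun x => k * f x) t (k * l).
Proof.
  intros Hf eps He.
  pose proof (Rabs_pos k).
  destruct (Hf (eps / (Rabs k + 1)) ltac:(apply Rdiv_lt_0_compat; lra))
    as [d [Hd Hs]].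
  exists d; split; auto. intros s H1 H2 H3.
  specialize (Hs s H1 H2 H3).
  replace ((k * f s - k * f t) / (s - t) - k * l) with
    (k * ((f s - f t) / (s - t) - l)) by (field; lra).
  rewrite Rabs_mult.
  pose proof (Rabs_pos ((f s - f t) / (s - t) - l)).
  apply Rle_lt_trans with ((Rabs k + 1) * Rabs ((f s - f t) / (s - t) - l)); [nra |].
  replace eps with ((Rabs k + 1) * (eps / (Rabs k + 1))) by (field; lra).
  apply Rmult_lt_compat_l; lra.
Qed.

Lemma deriv_within_cont (f : R -> R) t l :
  deriv_within a b f t l -> cont_within a b f t.
Proof.
  intros Hf eps He.
  pose proof (Rabs_pos l).
  destruct (Hf 1 ltac:(lra)) as [d [Hd Hs]].
  exists (Rmin d (eps / (Rabs l + 1))); split.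
  { apply Rmin_pos; auto. apply Rdiv_lt_0_compat; lra. }
  intros s H1 H2.
  destruct (Req_dec s t) as [-> | Hst]; [rewrite Rminus_diag, Rabs_R0; lra |].
  pose proof (Rmin_l d (eps / (Rabs l + 1))).
  pose proof (Rmin_r d (eps / (Rabs l + 1))).
  specialize (Hs s H1 Hst ltac:(lra)).
  set (q := (f s - f t) / (s - t)) in *.
  replace (f s - f t) with (q * (s - t)) by (unfold q; field; lra).
  rewrite Rabs_mult.
  assert (Hq : Rabs q <= Rabs l + 1).
  { replace q with ((q - l) + l) by ring.
    eapply Rle_trans; [apply Rabs_triang | lra]. }
  pose proof (Rabs_pos q). pose proof (Rabs_pos (s - t)).
  apply Rle_lt_trans with ((Rabs l + 1) * Rabs (s - t)); [nra |].
  replace eps with ((Rabs l + 1) * (eps / (Rabs l + 1))) by (field; lra).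
  apply Rmult_lt_compat_l; lra.
Qed.

Lemma derivable_pt_lim_deriv_within (f : R -> R) t l :
  derivable_pt_lim f t l -> deriv_within a b f t l.
Proof.
  intros Hf eps He. destruct (Hf eps He) as [d Hd].
  exists d; split; [apply cond_pos |].
  intros s _ Hst Hsd.
  specialize (Hd (s - t) ltac:(lra) Hsd).
  replace (t + (s - t)) with s in Hd by ring. exact Hd.
Qed.

(* The clamped extension is differentiable in the ordinary sense inside ]a,b[,
   which lets the mean value theorem of the standard library apply. *)
Lemma deriv_within_zero_const (f : R -> R) : a < b ->
  (forall t, a <= t <= b -> deriv_within a b f t 0) ->
  forall t, a <= t <= b -> f t = f a.
Proof.
  intros Hab Hf.
  pose (fe := fun x => f (clamp a b x)).
  assert (Hlim : forall x, a < x < b -> derivable_pt_lim fe x 0).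
  { intros x Hx eps He.
    destruct (Hf x ltac:(lra) eps He) as [d [Hd Hs]].
    assert (Hp : 0 < Rmin d (Rmin (x - a) (b - x))).
    { apply Rmin_pos; auto. apply Rmin_pos; lra. }
    exists (mkposreal _ Hp). intros u Hu0 Hu. simpl in Hu.
    pose proof (Rmin_l d (Rmin (x - a) (b - x))).
    pose proof (Rmin_r d (Rmin (x - a) (b - x))).
    pose proof (Rmin_l (x - a) (b - x)). pose proof (Rmin_r (x - a) (b - x)).
    assert (Hu' : u < Rmin (x - a) (b - x) /\ - Rmin (x - a) (b - x) < u)
      by (apply Rabs_def2; lra).
    unfold fe. rewrite (clamp_id a b (x + u)), (clamp_id a b x) by lra.
    specialize (Hs (x + u) ltac:(lra) ltac:(lra)).
    replace (x + u - x) with u in Hs by ring. apply Hs. lra. }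
  pose (pr := fun x (P : a < x < b) =>
    exist (fun l => derivable_pt_abs fe x l) 0 (Hlim x P) : derivable_pt fe x).
  assert (Hc : forall x, a <= x <= b -> continuity_pt fe x).
  { intros x _. apply continuity_pt_filterlim. apply continuous_clamp; [lra |].
    intros t Ht. apply (deriv_within_cont _ _ 0). auto. }
  intros t Ht.
  pose proof (null_derivative_loc fe a b pr Hc (fun x P => eq_refl) t Ht) as Hfe.
  unfold fe in Hfe. rewrite (clamp_id a b t), (clamp_id a b a) in Hfe; lra.
Qed.

End DerivWithin.

Section IntegralOnInterval.

Variables (a b : R) (c ce : R -> R).
Hypothesis ce_cont : forall x, continuous ce x.
Hypothesis c_ce : forall x, a <= x <= b -> c x = ce x.

Lemma Rint_on_interval x y : a <= x <= b -> a <= y <= b -> Rint c x y = RInt ce x y.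
Proof.
  intros Hx Hy. apply Rint_eq_RInt_continuous; auto.
  intros z Hz. apply c_ce. unfold Rmin, Rmax in Hz; destruct Rle_dec; lra.
Qed.

Lemma deriv_within_Rint t : a <= t <= b ->
  deriv_within a b (fun t => Rint c a t) t (c t).
Proof.
  intros Ht. rewrite (c_ce t Ht).
  apply (deriv_within_ext _ _ _ (fun t => RInt ce a t)); auto.
  { intros s Hs. apply Rint_on_interval; lra. }
  apply derivable_pt_lim_deriv_within, is_derive_Reals.
  apply (is_derive_RInt ce (RInt ce a) a t); auto.
  apply filter_forall. intros x.
  apply (@RInt_correct R_CompleteNormedModule), ex_RInt_continuous_R; auto.
Qed.

Lemma Rint_Chasles_on_interval x y z :
  a <= x <= b -> a <= y <= b -> a <= z <= b ->
  Rint c x y + Rint c y z = Rint c x z.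
Proof.
  intros Hx Hy Hz. rewrite !Rint_on_interval by auto.
  apply (RInt_Chasles ce x y z); apply ex_RInt_continuous_R; auto.
Qed.

Lemma Rint_gt_0_on_interval x y : (forall s, a <= s <= b -> 0 < c s) ->
  a <= x < y -> y <= b -> 0 < Rint c x y.
Proof.
  intros Hpos Hx Hy. rewrite Rint_on_interval by lra.
  apply RInt_gt_0; [lra | | auto].
  intros s Hs. rewrite <- c_ce by lra. apply Hpos; lra.
Qed.

End IntegralOnInterval.

Lemma inv_sq_wfun_continuous_ext T kappa eta : 0 < T -> riccati_sol T kappa eta ->
  exists ce : R -> R, (forall x, continuous ce x) /\
    forall x, 0 <= x <= T -> / wfun T kappa eta x ^ 2 = ce x.
Proof.
  intros HT [Hric _].
  pose (fe := fun s => eta (clamp 0 T s) - kappa).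
  assert (Hfe : forall x, continuous fe x).
  { intros x. apply (continuous_minus (fun s => eta (clamp 0 T s)) (fun _ => kappa)).
    - apply continuous_clamp; [lra |]. intros t Ht. eapply deriv_within_cont.
      apply Hric; auto.
    - apply continuous_const. }
  pose (Ie := fun x => RInt fe x T).
  assert (HIe : forall x, ex_derive Ie x).
  { intros x. eexists. apply (is_derive_RInt' fe Ie x T); auto.
    apply filter_forall. intros y.
    apply (@RInt_correct R_CompleteNormedModule), ex_RInt_continuous_R; auto. }
  exists (fun x => / exp (Ie x) ^ 2). split.
  - intros x. apply (@ex_derive_continuous R_AbsRing R_NormedModule). auto_derive.
    split; auto. split; auto. pose proof (exp_pos (Ie x)). nra.
  - intros x Hx. unfold wfun, Ie. do 3 f_equal.
    apply Rint_eq_RInt_continuous; auto. intros y Hy.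
    rewrite Rmin_left in Hy by lra. rewrite Rmax_right in Hy by lra.
    unfold fe. rewrite clamp_id by lra. reflexivity.
Qed.

Lemma inv_sq_wfun_pos T kappa eta x : 0 < / wfun T kappa eta x ^ 2.
Proof. apply Rinv_0_lt_compat, pow_lt, exp_pos. Qed.

Section LinearSystem.

Variables (T : R) (c P : R -> R).
Hypothesis T_pos : 0 < T.
Hypothesis P_deriv : forall t, 0 <= t <= T -> deriv_within 0 T P t (c t).
Hypothesis P_0 : P 0 = 0.

Lemma linear_system_solution_iff (mu h : R -> R) :
  ((forall t, 0 <= t <= T -> cont_within 0 T mu t /\ cont_within 0 T h t) /\
   (forall t, 0 <= t <= T ->
      deriv_within 0 T mu t (- c t * h t) /\ deriv_within 0 T h t 0) /\
   mu 0 = 0) <->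
  exists A, forall t, 0 <= t <= T -> mu t = - A * P t /\ h t = A.
Proof.
  split.
  - intros (_ & Hder & Hmu0).
    exists (h 0).
    assert (Hh : forall t, 0 <= t <= T -> h t = h 0)
      by (apply deriv_within_zero_const; auto; apply Hder).
    intros t Ht. split; auto.
    assert (Hconst : mu t + h 0 * P t = mu 0 + h 0 * P 0).
    { apply (deriv_within_zero_const 0 T (fun t => mu t + h 0 * P t)); auto.
      intros s Hs.
      replace 0 with (- c s * h s + h 0 * c s) at 2 by (rewrite Hh; auto; ring).
      apply deriv_within_plus; [apply Hder; auto |].
      apply deriv_within_scal; auto. }
    rewrite Hmu0, P_0 in Hconst. lra.
  - intros [A Hsol].
    assert (Hdmu : forall t, 0 <= t <= T -> deriv_within 0 T mu t (- c t * h t)).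
    { intros t Ht.
      apply (deriv_within_ext _ _ _ (fun t => - A * P t)); auto.
      { intros; apply Hsol; auto. }
      replace (- c t * h t) with (- A * c t) by (rewrite (proj2 (Hsol t Ht)); ring).
      apply deriv_within_scal; auto. }
    assert (Hdh : forall t, 0 <= t <= T -> deriv_within 0 T h t 0).
    { intros t Ht. apply (deriv_within_ext _ _ _ (fun _ => A)); auto.
      - intros; apply Hsol; auto.
      - apply deriv_within_const. }
    split; [| split].
    + intros t Ht. split; eapply deriv_within_cont; [apply Hdmu | apply Hdh]; auto.
    + auto.
    + rewrite (proj1 (Hsol 0 ltac:(lra))), P_0. ring.
Qed.

End LinearSystem.

Lemma gfun_fixed_point_iff T kappa delta eta r A :
  0 < rfun T kappa eta delta < r ->
  A = gfun T kappa delta eta (- A * r) <-> A = -1 \/ A = 0 \/ A = 1.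
Proof.
  unfold gfun. set (rd := rfun T kappa eta delta). intros Hr.
  destruct Rle_dec as [Hle | Hgt]; unfold Rsign.
  - split.
    + intros HA. right; left.
      assert (Hprod : A * (r - rd) = 0).
      { assert (A * rd = A * r) by (rewrite HA at 1; field; lra). lra. }
      destruct (Rmult_integral _ _ Hprod); lra.
    + intros [-> | [-> | ->]];
        try (rewrite Rabs_left in Hle by lra; lra);
        try (rewrite Rabs_right in Hle by lra; lra).
  - split.
    + repeat destruct Rlt_dec; lra.
    + intros [-> | [-> | ->]]; repeat destruct Rlt_dec; lra.
Qed.

Theorem mainTheorem1 (T kappa delta : R) (eta : R -> R)
  (hT : 0 < T) (hdelta : 0 < delta < T) (heta : riccati_sol T kappa eta) :
  forall mu h : R -> R,
    fb_solution T kappa delta eta mu h <->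
    exists A : R, (A = -1 \/ A = 0 \/ A = 1) /\
      forall t, 0 <= t <= T ->
        mu t = - A * Rint (fun s => / (wfun T kappa eta s) ^ 2) 0 t /\
        h t = A.
Proof.
  intros mu h.
  set (c := fun s => / wfun T kappa eta s ^ 2).
  destruct (inv_sq_wfun_continuous_ext T kappa eta hT heta) as (ce & ce_cont & c_ce).
  assert (P_deriv : forall t, 0 <= t <= T -> deriv_within 0 T (Rint c 0) t (c t))
    by (intros; now apply (deriv_within_Rint 0 T c ce)).
  assert (P_0 : Rint c 0 0 = 0)
    by (rewrite (Rint_on_interval 0 T c ce), RInt_point by (auto; lra); reflexivity).
  assert (Hr : 0 < rfun T kappa eta delta < Rint c 0 T).
  { assert (Hpos : forall s, 0 <= s <= T -> 0 < c s) by (intros; apply inv_sq_wfun_pos).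
    unfold rfun; fold c.
    rewrite <- (Rint_Chasles_on_interval 0 T c ce ce_cont c_ce 0 delta T) by lra.
    pose proof (Rint_gt_0_on_interval 0 T c ce ce_cont c_ce 0 delta Hpos).
    pose proof (Rint_gt_0_on_interval 0 T c ce ce_cont c_ce delta T Hpos).
    lra. }
  pose proof (linear_system_solution_iff T c (Rint c 0) hT P_deriv P_0 mu h) as Hlin.
  unfold fb_solution. split.
  - intros (Hcont & Hder & Hmu0 & HhT).
    destruct (proj1 Hlin (conj Hcont (conj Hder Hmu0))) as [A Hsol].
    exists A; split; auto.
    apply (gfun_fixed_point_iff T kappa delta eta (Rint c 0 T)); auto.
    destruct (Hsol T ltac:(lra)) as [<- <-]. exact HhT.
  - intros (A & HA & Hsol).
    destruct (proj2 Hlin (ex_intro _ A Hsol)) as (Hcont & Hder & Hmu0).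
    refine (conj Hcont (conj Hder (conj Hmu0 _))).
    destruct (Hsol T ltac:(lra)) as [-> ->].
    now apply gfun_fixed_point_iff.
Qed.
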